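(* There exists $\kappa>0$ such that for every $\omega\in\partial B\setminus\{z=0\}$, $$\gamma(s,\omega)\in\Gamma_{B,\kappa}(\omega)\quad\text{for all }s\in(0,1).$$
   Context: The first Heisenberg group $\mathbb{H}^1$ is $\mathbb{R}^3$ (points $(z,t)$, $z=x+\mathrm{i}y$) with product $(x,y,t)\cdot(x',y',t')=(x+x',y+y',t+t'-2xy'+2yx')$. Korányi norm $\|(z,t)\|=(|z|^4+t^2)^{1/4}$, distance $d(p,q)=\|q^{-1}\cdot p\|$, $d(q,A)=\inf_{a\in A}d(q,a)$, $B=\{q:\|q\|<1\}$. Radial curves: for $\omega=(z,t)\in\partial B$, $z\ne0$, $\gamma(s,\omega)=\big(sz\,e^{-\mathrm{i}\frac{t}{|z|^2}\log s},s^2t\big)$. For $\kappa>0$ and $\omega\in\partial B$, the nontangential region is $\Gamma_{B,\kappa}(\omega)=\{q\in B: d(q,\omega)<(1+\kappa)\,d(q,\partial B)\}$. *)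

From Stdlib Require Import Reals Lra.
Open Scope R_scope.

Definition H1 := (R * R * R)%type.
Definition hx (p : H1) : R := fst (fst p).
Definition hy (p : H1) : R := snd (fst p).
Definition ht (p : H1) : R := snd p.

Definition hmul (p q : H1) : H1 :=
  (hx p + hx q, hy p + hy q, ht p + ht q - 2 * hx p * hy q + 2 * hy p * hx q).
Definition hinv (p : H1) : H1 := (- hx p, - hy p, - ht p).

Definition absz2 (p : H1) : R := hx p ^ 2 + hy p ^ 2.

Definition knorm (p : H1) : R := sqrt (sqrt (absz2 p ^ 2 + ht p ^ 2)).

Definition kdist (p q : H1) : R := knorm (hmul (hinv q) p).

Definition inB (q : H1) : Prop := knorm q < 1.
Definition inbdB (q : H1) : Prop := knorm q = 1.

Definition is_dist_to_set (q : H1) (A : H1 -> Prop) (m : R) : Prop :=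
  (forall a, A a -> m <= kdist q a) /\
  (forall m', (forall a, A a -> m' <= kdist q a) -> m' <= m).

Definition Gamma (kappa : R) (omega q : H1) : Prop :=
  inB q /\ exists m, is_dist_to_set q inbdB m /\ kdist q omega < (1 + kappa) * m.

(* radial curve gamma(s,omega) = (s z e^{-i (t/|z|^2) log s}, s^2 t) *)
Definition gamma_curve (s : R) (omega : H1) : H1 :=
  let th := - (ht omega / absz2 omega) * ln s in
  (s * (hx omega * cos th - hy omega * sin th),
   s * (hx omega * sin th + hy omega * cos th),
   s ^ 2 * ht omega).

From Stdlib Require Import Reals Lra Psatz.
Open Scope R_scope.

(** Write [omega = (z, t)], [r = |z|^2], [q = gamma(s, omega)], so that
    [|q| = s] and [|z_q| <= sqrt r].  From below, a Cygan-type triangle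
    inequality [|a|^2 <= |q|^2 + d(q,a)^2 + 2 |z_q| d(q,a)] applied to
    boundary points [a] gives
    [d(q, boundary B) >= (1 - s^2) / (2 (sqrt r + sqrt (1 - s^2)))].
    From above, an explicit computation of [d(q, omega)^4] shows
    [d(q, omega) <= 13 (1 - s^2) / (sqrt r + sqrt (1 - s^2))]: the
    logarithmic twist of the radial curve makes the first-order terms of
    the vertical component cancel.  Hence [kappa = 26] works. *)

Lemma Rabs_le_inv (x b : R) : Rabs x <= b -> - b <= x <= b.
Proof. intros H. pose proof (Rle_abs x). pose proof (Rle_abs (- x)); rewrite Rabs_Ropp in *. lra. Qed.

Lemma sin_sub_id_bound (th : R) : -1 <= th <= 1 -> Rabs (sin th - th) <= th ^ 2 / 6.
Proof.
  intros Hth. pose proof PI2_1.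
  assert (key : forall a, 0 <= a <= 1 -> a - a ^ 2 / 6 <= sin a <= a).
  { intros a Ha. destruct (sin_bound a 0 ltac:(lra) ltac:(lra)) as [Hlow _].
    unfold sin_approx, sin_term in Hlow. simpl in Hlow.
    assert (a ^ 3 <= a ^ 2) by (simpl; nra).
    split; [nra|].
    destruct (Req_dec a 0) as [->|Ha0]; [rewrite sin_0; lra|].
    left; apply sin_lt_x; lra. }
  apply Rabs_le.
  destruct (Rle_dec 0 th).
  - destruct (key th ltac:(lra)). nra.
  - destruct (key (- th) ltac:(lra)). rewrite sin_neg in *. nra.
Qed.

Lemma one_sub_cos_le (th : R) : -1 <= th <= 1 -> 1 - cos th <= th ^ 2 / 2.
Proof.
  intros Hth. pose proof PI2_1.
  destruct (cos_bound th 0 ltac:(lra) ltac:(lra)) as [Hlow _].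
  unfold cos_approx, cos_term in Hlow. simpl in Hlow. lra.
Qed.

Lemma opp_ln_bounds (s : R) : 0 < s -> 1 - s <= - ln s <= / s - 1.
Proof.
  intros Hs. split.
  - pose proof (exp_ineq1_le (ln s)) as H. rewrite exp_ln in H by lra. lra.
  - pose proof (exp_ineq1_le (ln (/ s))) as H.
    rewrite exp_ln in H by (apply Rinv_0_lt_compat; lra).
    rewrite ln_Rinv in H by lra. lra.
Qed.

Lemma rotation_norm (x y c sn : R) :
  c ^ 2 + sn ^ 2 = 1 -> (x * c - y * sn) ^ 2 + (x * sn + y * c) ^ 2 = x ^ 2 + y ^ 2.
Proof.
  intros H. transitivity ((x ^ 2 + y ^ 2) * (c ^ 2 + sn ^ 2)); [ring|].
  rewrite H. ring.
Qed.

Lemma cos2_sin2 (th : R) : cos th ^ 2 + sin th ^ 2 = 1.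
Proof. pose proof (sin2_cos2 th). unfold Rsqr in *. lra. Qed.

Lemma pow4_le_reg (a b : R) : 0 <= b -> a ^ 4 <= b ^ 4 -> a <= b.
Proof.
  intros Hb H.
  apply Rsqr_incr_0_var; [|exact Hb].
  apply Rsqr_incr_0_var; [|unfold Rsqr; nra].
  unfold Rsqr. nra.
Qed.

Lemma pow4_add_le (a b : R) : (a + b) ^ 4 <= 8 * (a ^ 4 + b ^ 4).
Proof.
  assert (H1 : (a + b) ^ 2 <= 2 * (a ^ 2 + b ^ 2)) by (pose proof (pow2_ge_0 (a - b)); nra).
  assert (H2 : (a ^ 2 + b ^ 2) ^ 2 <= 2 * (a ^ 4 + b ^ 4))
    by (pose proof (pow2_ge_0 (a ^ 2 - b ^ 2)); nra).
  assert (H3 : ((a + b) ^ 2) ^ 2 <= (2 * (a ^ 2 + b ^ 2)) ^ 2) by (apply pow_incr; nra).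
  nra.
Qed.

Lemma plane_triangle (a1 a2 b1 b2 la lb : R) :
  0 <= la -> 0 <= lb -> a1 ^ 2 + a2 ^ 2 <= la ^ 2 -> b1 ^ 2 + b2 ^ 2 <= lb ^ 2 ->
  (a1 + b1) ^ 2 + (a2 + b2) ^ 2 <= (la + lb) ^ 2.
Proof.
  intros Hla Hlb Ha Hb.
  assert (lagrange : (a1 ^ 2 + a2 ^ 2) * (b1 ^ 2 + b2 ^ 2)
                     = (a1 * b1 + a2 * b2) ^ 2 + (a1 * b2 - a2 * b1) ^ 2) by ring.
  assert (Hprod : (a1 ^ 2 + a2 ^ 2) * (b1 ^ 2 + b2 ^ 2) <= la ^ 2 * lb ^ 2)
    by (apply Rmult_le_compat; nra).
  assert (cauchy_schwarz : a1 * b1 + a2 * b2 <= la * lb).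
  { apply Rsqr_incr_0_var; [|apply Rmult_le_pos; assumption].
    pose proof (pow2_ge_0 (a1 * b2 - a2 * b1)). unfold Rsqr.
    replace ((la * lb) * (la * lb)) with (la ^ 2 * lb ^ 2) by ring.
    replace ((a1 * b1 + a2 * b2) * (a1 * b1 + a2 * b2)) with ((a1 * b1 + a2 * b2) ^ 2) by ring.
    lra. }
  nra.
Qed.

Lemma quadratic_lower_bound (c sigma d : R) :
  0 <= c -> 0 < sigma -> 0 <= d -> sigma ^ 2 <= d ^ 2 + 2 * c * d ->
  sigma ^ 2 / (2 * (c + sigma)) <= d.
Proof.
  intros Hc Hsigma Hd H.
  assert (Hmul : sigma ^ 2 <= d * (2 * (c + sigma))).
  { destruct (Rle_dec sigma d); nra. }
  apply Rmult_le_reg_r with (2 * (c + sigma)); [lra|].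
  unfold Rdiv. rewrite Rmult_assoc, Rinv_l by lra. lra.
Qed.

Lemma absz2_ge0 (p : H1) : 0 <= absz2 p.
Proof. unfold absz2. nra. Qed.

Lemma knorm_ge0 (p : H1) : 0 <= knorm p.
Proof. apply sqrt_pos. Qed.

Lemma dist_to_set_exists (q w : H1) (A : H1 -> Prop) :
  A w -> exists m, is_dist_to_set q A m.
Proof.
  intros Hw.
  set (lower := fun v => forall a, A a -> v <= kdist q a).
  assert (Hbound : bound lower) by (exists (kdist q w); intros v Hv; apply Hv, Hw).
  assert (Hne : exists v, lower v).
  { exists 0. intros a _. apply knorm_ge0. }
  destruct (completeness lower Hbound Hne) as [m [Hub Hlub]].
  exists m. split.
  - intros a Ha. apply Hlub. intros v Hv. apply Hv, Ha.
  - exact Hub.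
Qed.

Lemma knorm_pow4 (p : H1) : knorm p ^ 4 = absz2 p ^ 2 + ht p ^ 2.
Proof.
  unfold knorm.
  replace (sqrt (sqrt (absz2 p ^ 2 + ht p ^ 2)) ^ 4)
    with ((sqrt (sqrt (absz2 p ^ 2 + ht p ^ 2)) ^ 2) ^ 2) by ring.
  rewrite pow2_sqrt by apply sqrt_pos. apply pow2_sqrt. nra.
Qed.

Lemma knorm_eq_of_pow4 (p : H1) (a : R) :
  0 <= a -> a ^ 4 = absz2 p ^ 2 + ht p ^ 2 -> knorm p = a.
Proof.
  intros Ha H. pose proof (knorm_pow4 p). pose proof (knorm_ge0 p).
  apply Rle_antisym; apply pow4_le_reg; lra.
Qed.

Lemma absz2_le_knorm_sq (p : H1) : absz2 p <= knorm p ^ 2.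
Proof.
  pose proof (knorm_pow4 p). pose proof (absz2_ge0 p).
  apply Rsqr_incr_0_var; unfold Rsqr; nra.
Qed.

Lemma kdist_sym (p q : H1) : kdist p q = kdist q p.
Proof.
  unfold kdist, knorm, absz2, hmul, hinv, hx, hy, ht; simpl.
  f_equal; f_equal; ring.
Qed.

Lemma hmul_hinv_cancel_l (p a : H1) : hmul p (hmul (hinv p) a) = a.
Proof.
  destruct p as [[x y] t], a as [[u v] w].
  unfold hmul, hinv, hx, hy, ht; simpl. f_equal; [f_equal|]; ring.
Qed.

(** The point [(|z|^2, t)] of the plane has length [knorm (z, t) ^ 2], and
    the group law adds these points up to a correction of length
    [2 |z| |z'|]. *)
Lemma knorm_sq_hmul_le (p h : H1) (c : R) :
  0 <= c -> absz2 p <= c ^ 2 ->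
  knorm (hmul p h) ^ 2 <= knorm p ^ 2 + knorm h ^ 2 + 2 * c * knorm h.
Proof.
  intros Hc Hpc.
  pose proof (knorm_pow4 (hmul p h)) as Nph.
  pose proof (knorm_pow4 p) as Np. pose proof (knorm_pow4 h) as Nh.
  pose proof (absz2_le_knorm_sq h). pose proof (absz2_ge0 p). pose proof (absz2_ge0 h).
  pose proof (knorm_ge0 h).
  set (g1 := 2 * (hx p * hx h + hy p * hy h)).
  set (g2 := 2 * (hy p * hx h - hx p * hy h)).
  assert (Ez : absz2 (hmul p h) = absz2 p + absz2 h + g1)
    by (unfold g1, absz2, hmul, hx, hy; simpl; ring).
  assert (Et : ht (hmul p h) = ht p + ht h + g2)
    by (unfold g2, hmul, hx, hy, ht; simpl; ring).
  assert (Eg : g1 ^ 2 + g2 ^ 2 = 4 * absz2 p * absz2 h) by (unfold g1, g2, absz2; ring).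
  assert (Hsum : (absz2 p + absz2 h) ^ 2 + (ht p + ht h) ^ 2
                 <= (knorm p ^ 2 + knorm h ^ 2) ^ 2)
    by (apply plane_triangle; nra).
  assert (Hcorr : g1 ^ 2 + g2 ^ 2 <= (2 * c * knorm h) ^ 2).
  { rewrite Eg. assert (absz2 p * absz2 h <= c ^ 2 * knorm h ^ 2)
      by (apply Rmult_le_compat; nra). nra. }
  assert (Htotal : (absz2 p + absz2 h + g1) ^ 2 + (ht p + ht h + g2) ^ 2
                   <= (knorm p ^ 2 + knorm h ^ 2 + 2 * c * knorm h) ^ 2)
    by (apply plane_triangle; nra).
  rewrite <- Ez, <- Et in Htotal.
  apply Rsqr_incr_0_var; unfold Rsqr; nra.
Qed.

Lemma kdist_to_boundary_ge (q a : H1) (rho : R) :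
  0 <= rho -> absz2 q <= rho ^ 2 -> knorm q < 1 -> inbdB a ->
  (1 - knorm q ^ 2) / (2 * (rho + sqrt (1 - knorm q ^ 2))) <= kdist q a.
Proof.
  intros Hrho Hq Hin Ha.
  pose proof (knorm_ge0 q).
  assert (Hpos : 0 < 1 - knorm q ^ 2) by nra.
  pose proof (knorm_sq_hmul_le q (hmul (hinv q) a) rho Hrho Hq) as Htri.
  change (knorm (hmul (hinv q) a)) with (kdist a q) in Htri.
  rewrite hmul_hinv_cancel_l, Ha, kdist_sym in Htri.
  rewrite <- (pow2_sqrt (1 - knorm q ^ 2)) at 1 by lra.
  apply quadratic_lower_bound.
  - exact Hrho.
  - apply sqrt_lt_R0, Hpos.
  - apply knorm_ge0.
  - rewrite pow2_sqrt by lra. lra.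
Qed.

Definition twist (s : R) (w : H1) : R := - (ht w / absz2 w) * ln s.

Lemma gamma_curve_twist (s : R) (w : H1) :
  gamma_curve s w =
  (s * (hx w * cos (twist s w) - hy w * sin (twist s w)),
   s * (hx w * sin (twist s w) + hy w * cos (twist s w)),
   s ^ 2 * ht w).
Proof. reflexivity. Qed.

Lemma absz2_gamma_curve (s : R) (w : H1) : absz2 (gamma_curve s w) = s ^ 2 * absz2 w.
Proof.
  rewrite gamma_curve_twist. generalize (twist s w). intros th.
  destruct w as [[x y] t]. unfold absz2, hx, hy, ht. cbn [fst snd].
  rewrite <- (rotation_norm x y (cos th) (sin th) (cos2_sin2 th)).
  ring.
Qed.

Lemma knorm_gamma_curve (s : R) (w : H1) : 0 <= s -> knorm (gamma_curve s w) = s * knorm w.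
Proof.
  intros Hs. pose proof (knorm_ge0 w).
  apply knorm_eq_of_pow4; [nra|].
  rewrite absz2_gamma_curve.
  replace ((s * knorm w) ^ 4) with (s ^ 4 * knorm w ^ 4) by ring.
  rewrite knorm_pow4. unfold gamma_curve, ht; simpl. ring.
Qed.

Lemma kdist_gamma_curve_pow4 (s : R) (w : H1) :
  kdist (gamma_curve s w) w ^ 4 =
  (absz2 w * (1 - 2 * s * cos (twist s w) + s ^ 2)) ^ 2
  + ((s ^ 2 - 1) * ht w + 2 * s * absz2 w * sin (twist s w)) ^ 2.
Proof.
  unfold kdist. rewrite knorm_pow4, gamma_curve_twist. generalize (twist s w). intros th.
  destruct w as [[x y] t]. unfold absz2, hmul, hinv, hx, hy, ht. cbn [fst snd].
  pose proof (cos2_sin2 th) as Hcs. f_equal; f_equal.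
  - transitivity ((x ^ 2 + y ^ 2) * (s ^ 2 * (cos th ^ 2 + sin th ^ 2) - 2 * s * cos th + 1));
      [ring|].
    rewrite Hcs. ring.
  - ring.
Qed.

Section RadialEstimate.

Variables r t s th L : R.
Hypothesis r_pos : 0 < r.
Hypothesis rt_unit : r ^ 2 + t ^ 2 = 1.
Hypothesis s_range : 0 < s < 1.
Hypothesis th_r : th * r = t * L.
Hypothesis L_range : 1 - s <= L <= / s - 1.

Let e := 1 - s.
Let P := 1 - 2 * s * cos th + s ^ 2.
Let T := (s ^ 2 - 1) * t + 2 * s * r * sin th.
Let radial_bounds : Prop :=
  Rabs (r * P * (r + 2 * e)) <= 48 * e ^ 2 /\ Rabs (T * (r + 2 * e)) <= 24 * e ^ 2.

Let P_eq : P = e ^ 2 + 2 * s * (1 - cos th).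
Proof. unfold P, e. ring. Qed.

Let P_ge0 : 0 <= P.
Proof. rewrite P_eq. pose proof (COS_bound th). unfold e. nra. Qed.

Let r_le1 : r <= 1.
Proof. nra. Qed.

Let t_bounds : -1 <= t <= 1.
Proof. nra. Qed.

Lemma radial_bounds_small_s :
  s <= 1 / 2 -> radial_bounds.
Proof.
  intros Hs. unfold radial_bounds. pose proof P_ge0. pose proof r_le1. pose proof t_bounds.
  pose proof (COS_bound th). pose proof (SIN_bound th).
  assert (He : 1 / 2 <= e <= 1) by (unfold e; lra).
  assert (HP : P <= 9 / 4) by (assert (0 <= s * (1 + cos th)) by nra; unfold P; nra).
  assert (HrP : 0 <= r * P <= 9 / 4) by (split; nra).
  assert (HT : -2 <= T <= 2).
  { assert (0 <= s * r <= 1 / 2) by nra. assert (0 <= 1 - s ^ 2 <= 1) by nra.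
    unfold T. nra. }
  split; apply Rabs_le; split; nra.
Qed.

Let L_le_2e : 1 / 2 < s -> L <= 2 * e.
Proof.
  intros Hs. assert (/ s - 1 = e / s) by (unfold e; field; lra).
  assert (e / s <= 2 * e).
  { apply Rmult_le_reg_r with s; [lra|].
    unfold Rdiv. rewrite Rmult_assoc, Rinv_l by lra. unfold e. nra. }
  lra.
Qed.

Lemma radial_bounds_small_r :
  1 / 2 < s -> r <= 2 * e -> radial_bounds.
Proof.
  intros Hs Hr. unfold radial_bounds. pose proof P_ge0. pose proof t_bounds.
  pose proof (COS_bound th). pose proof (SIN_bound th).
  assert (He : 0 < e < 1 / 2) by (unfold e; lra).
  assert (HP : P <= 17 / 4) by (rewrite P_eq; nra).
  assert (HrP : 0 <= r * P <= 2 * e * (17 / 4)) by (split; [nra|apply Rmult_le_compat; nra]).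
  assert (HT : - (6 * e) <= T <= 6 * e).
  { assert (0 <= 1 - s ^ 2 <= 2 * e) by (unfold e; nra).
    assert (0 <= s * r <= 2 * e) by nra.
    unfold T. nra. }
  assert (Hw : 0 < r + 2 * e <= 4 * e) by lra.
  split; apply Rabs_le; split; nra.
Qed.

(** Here [|th| <= 1] and [th r = t L]: to second order in [e], the term
    [2 s r sin th] of [T] is [2 s t L], which cancels [(s^2 - 1) t]. *)
Lemma radial_bounds_large_r :
  1 / 2 < s -> 2 * e < r -> radial_bounds.
Proof.
  intros Hs Hr. unfold radial_bounds. pose proof P_ge0. pose proof r_le1. pose proof t_bounds.
  pose proof (L_le_2e Hs).
  assert (He : 0 < e < 1 / 2) by (unfold e; lra).
  assert (HL : 0 <= L <= 2 * e) by (unfold e in *; lra).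
  assert (Hthr : (th * r) ^ 2 <= 4 * e ^ 2).
  { rewrite th_r. assert (t ^ 2 <= 1) by nra. assert (L ^ 2 <= 4 * e ^ 2) by nra.
    replace ((t * L) ^ 2) with (t ^ 2 * L ^ 2) by ring.
    apply Rle_trans with (1 * L ^ 2); [apply Rmult_le_compat_r; nra | lra]. }
  assert (Hth : -1 <= th <= 1).
  { assert (th ^ 2 <= 1) by (apply Rmult_le_reg_r with (r ^ 2); nra). nra. }
  pose proof (one_sub_cos_le th Hth).
  pose proof (sin_sub_id_bound th Hth) as Hsin. apply Rabs_le_inv in Hsin.
  assert (HP : P <= e ^ 2 + th ^ 2).
  { rewrite P_eq. pose proof (COS_bound th).
    assert (s * (1 - cos th) <= 1 - cos th) by nra. lra. }
  assert (HrP : 0 <= r * P * (r + 2 * e) <= 2 * r ^ 2 * P).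
  { split; [apply Rmult_le_pos; [apply Rmult_le_pos|]; lra|].
    assert (0 <= r * P) by (apply Rmult_le_pos; lra). nra. }
  assert (HT_eq : T = t * (s ^ 2 - 1 + 2 * s * L) + 2 * s * r * (sin th - th)).
  { unfold T. assert (2 * s * r * th = 2 * s * (t * L)) by (rewrite <- th_r; ring). nra. }
  assert (Hcancel : - e ^ 2 <= s ^ 2 - 1 + 2 * s * L <= e ^ 2).
  { assert (s * L <= 1 - s).
    { assert (s * (/ s - 1) = 1 - s) by (field; lra). nra. }
    unfold e in *; nra. }
  assert (HT : Rabs T <= e ^ 2 + r * th ^ 2 / 3).
  { rewrite HT_eq. apply Rabs_le. assert (0 <= s * r <= r) by nra. nra. }
  apply Rabs_le_inv in HT.
  split; apply Rabs_le; split; nra.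
Qed.

Lemma radial_deviation_bound :
  ((r * P) ^ 2 + T ^ 2) * (r + 2 * e) ^ 2 <= 2880 * e ^ 4.
Proof.
  assert (H : radial_bounds).
  { destruct (Rle_dec s (1 / 2)).
    - apply radial_bounds_small_s; lra.
    - destruct (Rle_dec r (2 * e)).
      + apply radial_bounds_small_r; lra.
      + apply radial_bounds_large_r; lra. }
  destruct H as [Hh Hv].
  apply (pow_maj_Rabs _ _ 2) in Hh. apply (pow_maj_Rabs _ _ 2) in Hv.
  nra.
Qed.

End RadialEstimate.

Lemma kdist_gamma_curve_le (s : R) (w : H1) :
  inbdB w -> 0 < absz2 w -> 0 < s < 1 ->
  kdist (gamma_curve s w) w * (sqrt (absz2 w) + sqrt (1 - s ^ 2)) <= 13 * (1 - s ^ 2).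
Proof.
  intros Hw Hr Hs.
  assert (Hs2 : 0 <= 1 - s ^ 2 <= 2 * (1 - s)) by (split; nra).
  assert (He : (1 - s) ^ 4 <= (1 - s ^ 2) ^ 4) by (apply pow_incr; nra).
  pose proof (kdist_gamma_curve_pow4 s w) as HD.
  set (D := kdist (gamma_curve s w) w) in *.
  set (th := twist s w) in *.
  set (r := absz2 w) in *. set (t := ht w) in *.
  assert (Hrt : r ^ 2 + t ^ 2 = 1).
  { pose proof (knorm_pow4 w) as H4. rewrite Hw, pow1 in H4. fold r t in H4. lra. }
  assert (Hthr : th * r = t * - ln s) by (unfold th, twist; fold r t; field; lra).
  pose proof (radial_deviation_bound r t s th (- ln s) Hr Hrt Hs Hthr
                (opp_ln_bounds s (proj1 Hs))) as Hdev.
  rewrite <- HD in Hdev.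
  set (rho := sqrt r). set (sigma := sqrt (1 - s ^ 2)).
  assert (Hrho : rho ^ 2 = r) by (apply pow2_sqrt; lra).
  assert (Hsigma : sigma ^ 2 = 1 - s ^ 2) by (apply pow2_sqrt; lra).
  assert (Hrho0 : 0 <= rho) by apply sqrt_pos.
  assert (Hsigma0 : 0 <= sigma) by apply sqrt_pos.
  assert (HD0 : 0 <= D) by apply knorm_ge0.
  assert (Hsum : (rho + sigma) ^ 4 <= 8 * (r + 2 * (1 - s)) ^ 2).
  { pose proof (pow4_add_le rho sigma).
    replace (rho ^ 4) with ((rho ^ 2) ^ 2) in * by ring.
    replace (sigma ^ 4) with ((sigma ^ 2) ^ 2) in * by ring.
    rewrite Hrho, Hsigma in *. nra. }
  apply pow4_le_reg; [lra|].
  replace ((D * (rho + sigma)) ^ 4) with (D ^ 4 * (rho + sigma) ^ 4) by ring.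
  assert (D ^ 4 * (rho + sigma) ^ 4 <= D ^ 4 * (8 * (r + 2 * (1 - s)) ^ 2))
    by (apply Rmult_le_compat_l; [apply pow_le|]; lra).
  nra.
Qed.

Theorem proposition2p6 :
  exists kappa : R, 0 < kappa /\
    forall omega : H1, inbdB omega -> absz2 omega <> 0 ->
      forall s : R, 0 < s < 1 -> Gamma kappa omega (gamma_curve s omega).
Proof.
  exists 26. split; [lra|].
  intros w Hw Hz s Hs.
  assert (Hr : 0 < absz2 w) by (pose proof (absz2_ge0 w); lra).
  assert (Hs2 : 0 < 1 - s ^ 2 <= 1) by (split; nra).
  set (q := gamma_curve s w).
  assert (Hq : knorm q = s) by (unfold q; rewrite knorm_gamma_curve, Hw; lra).
  assert (Hzq : absz2 q <= sqrt (absz2 w) ^ 2).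
  { unfold q. rewrite absz2_gamma_curve, pow2_sqrt by lra. nra. }
  destruct (dist_to_set_exists q w inbdB Hw) as [m Hm].
  set (rho := sqrt (absz2 w)). set (sigma := sqrt (1 - s ^ 2)).
  assert (Hrho : 0 <= rho) by apply sqrt_pos.
  assert (Hsigma : 0 < sigma) by (apply sqrt_lt_R0; lra).
  set (l := (1 - s ^ 2) / (2 * (rho + sigma))).
  assert (Hl : l * (2 * (rho + sigma)) = 1 - s ^ 2) by (unfold l; field; lra).
  assert (Hl0 : 0 < l) by (unfold l; apply Rdiv_lt_0_compat; lra).
  assert (Hlow : l <= m).
  { apply (proj2 Hm). intros a Ha. unfold l, sigma. rewrite <- Hq at 1 2.
    apply kdist_to_boundary_ge; [exact Hrho | exact Hzq | lra | exact Ha]. }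
  assert (Hup : kdist q w * (rho + sigma) <= 13 * (1 - s ^ 2))
    by (apply kdist_gamma_curve_le; assumption).
  assert (Hdl : kdist q w <= 26 * l)
    by (apply Rmult_le_reg_r with (rho + sigma); nra).
  split; [unfold inB; lra|].
  exists m. split; [exact Hm | lra].
Qed.
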